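(* In each of the categories $\mathsf{Haus}$ (Hausdorff spaces), $\mathsf{Top}_1$ (T$_1$-spaces) and $\mathsf{Top}_0$ (T$_0$-spaces), a space is finitely generated with respect to open embeddings if, and only if, it is compact.
   Context: An open embedding is an injective continuous open map. For a class $\mathcal{M}$ of monomorphisms of a category $\mathcal{C}$ (here: morphisms of the category that are open embeddings), an object $X$ is finitely generated w.r.t. $\mathcal{M}$ if for every directed diagram $(Z_i)_{i\in I}$ (indexed by a directed poset, i.e. every finite subset has an upper bound) with connecting morphisms $z_{i,j}$ in $\mathcal{M}$ and colimit cocone $c_i:Z_i\to Z$ in $\mathcal{C}$, every morphism $f:X\to Z$ factorizes as $f=c_i\cdot g$ for some $i$ and $g:X\to Z_i$, and if also $f=c_i\cdot g'$ then $z_{i,j}\cdot g=z_{i,j}\cdot g'$ for some connecting morphism $z_{i,j}$. *)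

From HB Require Import structures.
From mathcomp Require Import all_boot all_order.
From mathcomp Require Import all_classical topology.
Set Implicit Arguments. Unset Strict Implicit. Unset Printing Implicit Defensive.
Local Open Scope classical_set_scope.

(* The three full subcategories of Top considered in the paper;
   morphisms are continuous maps.  Objects are given by a predicate. *)
Definition Haus (T : topologicalType) : Prop := @hausdorff_space T.
Definition Top1 (T : topologicalType) : Prop := @accessible_space T.
Definition Top0 (T : topologicalType) : Prop := @kolmogorov_space T.

Definition open_embedding (X Y : topologicalType) (f : X -> Y) : Prop :=
  [/\ injective f, continuous f & forall U : set X, open U -> open (f @` U)].

Definition directed_poset (I : Type) (le : I -> I -> Prop) : Prop :=
  [/\ (forall i, le i i),
      (forall i j k, le i j -> le j k -> le i k),
      (forall i j, le i j -> le j i -> i = j) &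
      (forall A : set I, finite_set A -> exists j, forall i, A i -> le i j)].

Definition oe_diagram (P : topologicalType -> Prop) (I : Type)
  (le : I -> I -> Prop) (Z : I -> topologicalType)
  (z : forall i j, le i j -> Z i -> Z j) : Prop :=
  [/\ directed_poset le,
      (forall i, P (Z i)),
      (forall i j (h : le i j), open_embedding (z i j h)),
      (forall i (h : le i i), z i i h =1 id) &
      (forall i j k (hij : le i j) (hjk : le j k) (hik : le i k),
          z i k hik =1 z j k hjk \o z i j hij)].

Definition is_cocone (I : Type) (le : I -> I -> Prop) (Z : I -> topologicalType)
  (z : forall i j, le i j -> Z i -> Z j) (W : topologicalType)
  (d : forall i, Z i -> W) : Prop :=
  (forall i, continuous (d i)) /\
  (forall i j (h : le i j), d j \o z i j h = d i).

Definition is_colimit (P : topologicalType -> Prop) (I : Type)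
  (le : I -> I -> Prop) (Z : I -> topologicalType)
  (z : forall i j, le i j -> Z i -> Z j) (Zc : topologicalType)
  (c : forall i, Z i -> Zc) : Prop :=
  [/\ P Zc, is_cocone z c &
      forall (W : topologicalType), P W -> forall d : forall i, Z i -> W,
        is_cocone z d ->
        exists u : Zc -> W, (continuous u /\ forall i, u \o c i = d i) /\
          (forall u' : Zc -> W, continuous u' -> (forall i, u' \o c i = d i) ->
             u' = u)].

Definition fin_gen_oe (P : topologicalType -> Prop) (X : topologicalType) : Prop :=
  forall (I : Type) (le : I -> I -> Prop) (Z : I -> topologicalType)
         (z : forall i j, le i j -> Z i -> Z j)
         (Zc : topologicalType) (c : forall i, Z i -> Zc),
    oe_diagram P z -> is_colimit P z c ->
    forall f : X -> Zc, continuous f ->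
      (exists i (g : X -> Z i), continuous g /\ f = c i \o g) /\
      (forall i (g g' : X -> Z i), continuous g -> continuous g' ->
         f = c i \o g -> f = c i \o g' ->
         exists j (h : le i j), z i j h \o g = z i j h \o g').

From HB Require Import structures.
From mathcomp Require Import all_boot all_order.
From mathcomp Require Import all_classical topology finmap.
Local Open Scope classical_set_scope.

(* In each of the three categories, the colimit in Top of a directed diagram of
   open embeddings (the union of the stages glued along the connecting maps)
   again satisfies the separation axiom, because any two of its points come
   from a common stage.  So it is also the colimit in the subcategory: the
   colimit injections are open embeddings whose images form a directed open
   cover.  A compact image f(X) lies in one of these images, and f factors
   through it.  Conversely, the finite unions of the members of an open cover
   of X, as open subspaces, form such a diagram with colimit X; factoring the
   identity of X through one stage yields a finite subcover. *)

Definition pullback_closed (P : topologicalType -> Prop) : Prop :=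
  forall (A B : topologicalType) (f : A -> B),
    injective f -> continuous f -> P B -> P A.

Definition open_union_closed (P : topologicalType -> Prop) : Prop :=
  forall (L : topologicalType) (K : Type) (Y : K -> topologicalType)
         (l : forall k, Y k -> L),
    (forall k, P (Y k)) -> (forall k, injective (l k)) ->
    (forall k U, open U -> open (l k @` U)) ->
    (forall a b : L, exists k x y, a = l k x /\ b = l k y) -> P L.

Section PointSeparation.
Variable sep : forall T : topologicalType, T -> T -> Prop.

Definition separates_points (T : topologicalType) : Prop :=
  forall x y : T, x != y -> sep T x y.

Hypothesis sep_pullback : forall (A B : topologicalType) (f : A -> B),
  continuous f -> forall x y, sep B (f x) (f y) -> sep A x y.
Hypothesis sep_push : forall (A B : topologicalType) (f : A -> B),
  injective f -> (forall U, open U -> open (f @` U)) ->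
  forall x y, sep A x y -> sep B (f x) (f y).

Lemma separates_points_pullback_closed : pullback_closed separates_points.
Proof.
move=> A B f f_inj f_cont sepB x y xy; apply: sep_pullback f_cont _ _ _.
by apply: sepB; apply: contra_neq xy => /f_inj.
Qed.

Lemma separates_points_open_union_closed : open_union_closed separates_points.
Proof.
move=> L K Y l sepY l_inj l_open l_pair a b ab.
have [k [x [y [ea eb]]]] := l_pair a b; rewrite ea eb.
apply: sep_push (l_inj k) (l_open k) _ _ _; apply: sepY.
by apply: contra_neq ab => xy; rewrite ea eb xy.
Qed.

End PointSeparation.

Definition sep_T0 (T : topologicalType) (x y : T) : Prop :=
  exists U : set T, open U /\ (U x /\ ~ U y \/ U y /\ ~ U x).
Definition sep_T1 (T : topologicalType) (x y : T) : Prop :=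
  exists U : set T, [/\ open U, U x & ~ U y].
Definition sep_T2 (T : topologicalType) (x y : T) : Prop :=
  exists U V : set T, [/\ open U, open V, U x, V y & U `&` V = set0].

Arguments sep_T0 [T] x y.
Arguments sep_T1 [T] x y.
Arguments sep_T2 [T] x y.

Lemma Top0E : Top0 = separates_points sep_T0.
Proof.
apply/funext => T; apply/propext; split=> T0 x y /T0 [A].
  by case=> -[]; rewrite !in_setE nbhsE => -[U [oU Ux] UA] nA; exists U;
    split=> //; [left|right]; split=> // /UA.
case=> oA [[Ax nAy]|[Ay nAx]]; exists A; [left|right];
  by rewrite !in_setE; split=> //; exact: open_nbhs_nbhs.
Qed.

Lemma Top1E : Top1 = separates_points sep_T1.
Proof.
apply/funext => T; apply/propext.
by split=> T1 x y /T1 [A [oA Ax nAy]]; exists A; move: Ax nAy; rewrite !in_setE.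
Qed.

Lemma HausE : Haus = separates_points sep_T2.
Proof.
apply/funext => T; apply/propext; rewrite /Haus open_hausdorff.
split=> T2 x y /T2.
  by move=> [[U V] /= [+ +] [oU oV /eqP UV]]; rewrite !in_setE; exists U, V.
move=> [U [V [oU oV Ux Vy UV]]]; exists (U, V); first by rewrite /= !in_setE.
by split=> //; apply/eqP.
Qed.

Lemma sep_T0_pullback (A B : topologicalType) (f : A -> B) :
  continuous f -> forall x y, sep_T0 (f x) (f y) -> sep_T0 x y.
Proof. by move=> /continuousP f_cont x y [U [/f_cont oU sepU]]; exists (f @^-1` U). Qed.

Lemma sep_T1_pullback (A B : topologicalType) (f : A -> B) :
  continuous f -> forall x y, sep_T1 (f x) (f y) -> sep_T1 x y.
Proof. by move=> /continuousP f_cont x y [U [/f_cont oU sepU]]; exists (f @^-1` U). Qed.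

Lemma sep_T2_pullback (A B : topologicalType) (f : A -> B) :
  continuous f -> forall x y, sep_T2 (f x) (f y) -> sep_T2 x y.
Proof.
move=> /continuousP f_cont x y [U [V [/f_cont oU /f_cont oV Ufx Vfy UV]]].
by exists (f @^-1` U), (f @^-1` V); split=> //; rewrite -preimage_setI UV preimage_set0.
Qed.

Section OpenInjection.
Variables (A B : topologicalType) (f : A -> B).
Hypotheses (f_inj : injective f) (f_open : forall U, open U -> open (f @` U)).

Lemma sep_T0_push x y : sep_T0 x y -> sep_T0 (f x) (f y).
Proof. by move=> [U [/f_open oU]]; exists (f @` U); rewrite !(image_inj f_inj). Qed.

Lemma sep_T1_push x y : sep_T1 x y -> sep_T1 (f x) (f y).
Proof. by move=> [U [/f_open oU]]; exists (f @` U); rewrite !(image_inj f_inj). Qed.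

Lemma sep_T2_push x y : sep_T2 x y -> sep_T2 (f x) (f y).
Proof.
move=> [U [V [/f_open oU /f_open oV Ux Vy UV]]].
exists (f @` U), (f @` V); rewrite !(image_inj f_inj); split=> //.
apply/seteqP; split=> // _ [[u Uu <-] [v Vv /f_inj vu]].
have : (U `&` V) u by split=> //; rewrite -vu.
by rewrite UV.
Qed.

End OpenInjection.

Lemma compact_cover_unpointed (T : topologicalType) : compact = @cover_compact T.
Proof.
apply/funext => A; apply/propext.
have [[x _]|T0] := pselect (exists x : T, True).
  pose Tx : ptopologicalType := HB.pack T (isPointed.Build T x).
  by change (@compact Tx A <-> @cover_compact Tx A); rewrite compact_cover.
have -> : A = set0 by apply/seteqP; split=> // y; case: T0; exists y.
by split=> _; [move=> I D F _ _; exists fset0 | exact: compact0].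
Qed.

Lemma compact_directed_cover {T : topologicalType} {I : Type}
    {le : I -> I -> Prop} {O : I -> set T} {A : set T} :
  directed_poset le -> (forall i j, le i j -> O i `<=` O j) ->
  (forall i, open (O i)) -> (forall y, exists i, O i y) ->
  compact A -> exists k, A `<=` O k.
Proof.
move=> [_ _ _ ub] O_mono O_open O_cover; rewrite compact_cover_unpointed => A_cpt.
pose idx y := projT1 (cid (O_cover y)).
have idxP y : O (idx y) y by rewrite /idx; case: cid.
have [|D' _ D'_cover] := A_cpt T A (O \o idx) (fun y _ => O_open _).
  by move=> y Ay; exists y.
have [k idx_le] := ub _ (finite_image idx (finite_fset D')).
exists k => y /D'_cover [x D'x Oy]; apply: O_mono Oy.
by apply: idx_le; exists x.
Qed.

Lemma open_injection_factor {X Y Z : topologicalType} {e : Y -> Z} {f : X -> Z} :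
  injective e -> (forall U, open U -> open (e @` U)) -> continuous f ->
  range f `<=` range e -> exists g : X -> Y, continuous g /\ f = e \o g.
Proof.
move=> e_inj e_open /continuousP f_cont fe.
have /choice [g gP] : forall x, exists y, e y = f x.
  by move=> x; have [y _ <-] := fe (f x) (imageT f x); exists y.
exists g; split; last by apply/funext => x; rewrite /= gP.
apply/continuousP => V oV.
suff -> : g @^-1` V = f @^-1` (e @` V) by exact/f_cont/e_open.
apply/seteqP; split=> [x Vgx|x [y Vy]] /=; first by exists (g x).
by rewrite -gP => /e_inj <-.
Qed.

Lemma colimit_retraction {P : topologicalType -> Prop} {I : Type}
    {le : I -> I -> Prop} {Z : I -> topologicalType}
    {z : forall i j, le i j -> Z i -> Z j} {Zc W : topologicalType}
    {c : forall i, Z i -> Zc} {d : forall i, Z i -> W} {v : W -> Zc} :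
  is_colimit P z c -> P W -> is_cocone z d ->
  continuous v -> (forall i, v \o d i = c i) ->
  exists u : Zc -> W, [/\ continuous u, forall i, u \o c i = d i & cancel u v].
Proof.
move=> [PZc c_cocone c_univ] PW d_cocone v_cont vd.
have [u [[u_cont uc] _]] := c_univ W PW d d_cocone.
have [u0 [_ c_uniq]] := c_univ Zc PZc c c_cocone.
have vu : v \o u = id.
  have -> : id = u0 by apply: c_uniq => // y.
  apply: c_uniq => [y|i]; first exact: continuous_comp (u_cont y) (v_cont _).
  by rewrite -compA uc vd.
by exists u; split=> // y; rewrite -[RHS]/(id y) -vu.
Qed.

Section DirectedColimit.
Variables (I : Type) (le : I -> I -> Prop) (Z : I -> topologicalType)
  (z : forall i j, le i j -> Z i -> Z j).
Hypothesis le_directed : directed_poset le.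
Hypothesis z_oe : forall i j (h : le i j), open_embedding (z i j h).
Hypothesis z_id : forall i (h : le i i), z i i h =1 id.
Hypothesis z_comp : forall i j k (hij : le i j) (hjk : le j k) (hik : le i k),
  z i k hik =1 z j k hjk \o z i j hij.

Let dir_refl i : le i i. Proof. by case: le_directed. Qed.

Let dir_trans i j k : le i j -> le j k -> le i k.
Proof. by case: le_directed => _ + _ _; apply. Qed.

Let dir_ub i j : exists k, le i k /\ le j k.
Proof.
case: le_directed => _ _ _ /(_ [set i; j] (finite_set2 _ _)) [k ub].
by exists k; split; apply: ub; [left | right].
Qed.

Let z_irr i j (h h' : le i j) : z i j h = z i j h'.
Proof. by rewrite (Prop_irrelevance h h'). Qed.

Let z_compE i j k (hij : le i j) (hjk : le j k) x :
  z _ _ hjk (z _ _ hij x) = z _ _ (dir_trans _ _ _ hij hjk) x.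
Proof. by rewrite (z_comp _ _ _ hij hjk). Qed.

Definition colim_rel (p q : {i & Z i}) : Prop :=
  exists k (hp : le (projT1 p) k) (hq : le (projT1 q) k),
    z _ _ hp (projT2 p) = z _ _ hq (projT2 q).

Let colim_rel_refl p : colim_rel p p.
Proof. by exists (projT1 p), (dir_refl _), (dir_refl _). Qed.

Let colim_rel_sym p q : colim_rel p q -> colim_rel q p.
Proof. by move=> [k [hp [hq e]]]; exists k, hq, hp. Qed.

Let colim_rel_trans p q r : colim_rel p q -> colim_rel q r -> colim_rel p r.
Proof.
move=> [k [hp [hq e]]] [k' [hq' [hr e']]].
have [m [km k'm]] := dir_ub k k'.
exists m, (dir_trans _ _ _ hp km), (dir_trans _ _ _ hr k'm).
rewrite (z_comp _ _ _ hp km (dir_trans _ _ _ hp km)).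
rewrite (z_comp _ _ _ hr k'm (dir_trans _ _ _ hr k'm)) /= e -e' !z_compE.
by rewrite (z_irr _ _ (dir_trans _ _ _ hq km) (dir_trans _ _ _ hq' k'm)).
Qed.

(* The colimit in Top: the classes of [colim_rel] on the disjoint union of the
   stages, with the final topology of the injections [colim_in]. *)
Definition colim : Type := {S : set {i & Z i} | exists p, S = colim_rel p}.
HB.instance Definition _ := gen_eqMixin colim.
HB.instance Definition _ := gen_choiceMixin colim.

Definition colim_in i (x : Z i) : colim := exist _ _ (ex_intro _ (existT _ i x) erefl).

Definition colim_open (U : set colim) : Prop := forall i, open (colim_in i @^-1` U).

Let colim_openT : colim_open setT.
Proof. by move=> i; rewrite preimage_setT; exact: openT. Qed.

Let colim_openI : setI_closed colim_open.
Proof. by move=> U V oU oV i; rewrite preimage_setI; exact: openI. Qed.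

Let colim_open_bigcup (J : Type) (U : J -> set colim) :
  (forall j, colim_open (U j)) -> colim_open (\bigcup_j U j).
Proof. by move=> oU i; rewrite preimage_bigcup; apply: bigcup_open => j _; exact: oU. Qed.

HB.instance Definition _ :=
  isOpenTopological.Build colim colim_openT colim_openI colim_open_bigcup.

Lemma colim_openP (U : set colim) : open U <-> forall i, open (colim_in i @^-1` U).
Proof. exact: iff_refl. Qed.

Lemma colim_inE i j (x : Z i) (y : Z j) :
  colim_in i x = colim_in j y <-> colim_rel (existT _ i x) (existT _ j y).
Proof.
split=> [/(congr1 sval) /= ->|xy]; first exact: colim_rel_refl.
apply: eq_exist; apply/seteqP; split=> r.
  exact/colim_rel_trans/colim_rel_sym.
exact: colim_rel_trans.
Qed.

Lemma colim_in_inj i : injective (colim_in i).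
Proof.
move=> x y /colim_inE [k [hx [hy /=]]]; rewrite (z_irr _ _ hx hy).
by case: (z_oe i k hy) => + _ _; apply.
Qed.

Lemma colim_in_z i j (h : le i j) x : colim_in j (z i j h x) = colim_in i x.
Proof. by apply/colim_inE; exists j, (dir_refl j), h; rewrite /= z_id. Qed.

Lemma colim_in_surj (S : colim) : exists i x, S = colim_in i x.
Proof. by case: S => S [[i x] e]; exists i, x; exact: eq_exist. Qed.

Lemma colim_in_continuous i : continuous (colim_in i).
Proof. by apply/continuousP => U /colim_openP. Qed.

Lemma colim_in_open i (U : set (Z i)) : open U -> open (colim_in i @` U).
Proof.
move=> oU; apply/colim_openP => j; rewrite openE.
move=> y [x Ux /colim_inE [k [hx [hy /= e]]]].
have [_ /continuousP hy_cont hy_open] := z_oe j k hy.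
have [_ _ hx_open] := z_oe i k hx.
apply: (@filterS _ _ _ (z _ _ hy @^-1` (z _ _ hx @` U))).
  move=> y' [x' Ux' e']; exists x' => //.
  by apply/colim_inE; exists k, hx, hy.
by apply: open_nbhs_nbhs; split; [exact/hy_cont/hx_open | exists x].
Qed.

Lemma colim_in_cocone : is_cocone z colim_in.
Proof.
split; first exact: colim_in_continuous.
by move=> i j h; apply/funext => x /=; exact: colim_in_z.
Qed.

Section Lift.
Variables (W : topologicalType) (d : forall i, Z i -> W).
Hypothesis d_cocone : is_cocone z d.

Definition colim_lift (S : colim) : W :=
  let p := projT1 (cid (svalP S)) in d (projT1 p) (projT2 p).

Lemma colim_liftE i x : colim_lift (colim_in i x) = d i x.
Proof.
rewrite /colim_lift; case: cid => -[j y] /= e.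
have /colim_inE [k [hx [hy /= xy]]] : colim_in i x = colim_in j y by exact: eq_exist.
by have [_ dz] := d_cocone; rewrite -(dz _ _ hx) -(dz _ _ hy) /= xy.
Qed.

Lemma colim_lift_continuous : continuous colim_lift.
Proof.
apply/continuousP => U oU; apply/colim_openP => i.
have lift_in : colim_lift \o colim_in i = d i.
  by apply/funext => x /=; rewrite colim_liftE.
have [/(_ i)/continuousP d_cont _] := d_cocone.
by rewrite -comp_preimage lift_in; exact: d_cont.
Qed.

End Lift.

Arguments colim_liftE {W d}.
Arguments colim_lift_continuous {W d}.

Lemma open_union_closed_colim {P : topologicalType -> Prop} :
  open_union_closed P -> (forall i, P (Z i)) -> P colim.
Proof.
move=> PU PZ; apply: (PU _ _ _ _ PZ colim_in_inj colim_in_open) => a b.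
have [i [x ->]] := colim_in_surj a; have [j [y ->]] := colim_in_surj b.
have [k [ik jk]] := dir_ub i j.
by exists k, (z _ _ ik x), (z _ _ jk y); rewrite !colim_in_z.
Qed.

Lemma colimit_legs (P : topologicalType -> Prop) (Zc : topologicalType)
    (c : forall i, Z i -> Zc) :
  open_union_closed P -> (forall i, P (Z i)) -> is_colimit P z c ->
  [/\ forall i, injective (c i), forall i U, open U -> open (c i @` U)
    & forall y, exists i x, y = c i x].
Proof.
move=> PU PZ c_colim; have [_ c_cocone _] := c_colim.
have [u [u_cont uc uK]] := colimit_retraction c_colim
  (open_union_closed_colim PU PZ) colim_in_cocone (colim_lift_continuous c_cocone)
  (fun i => funext (colim_liftE c_cocone i)).
have ucE i x : u (c i x) = colim_in i x by rewrite -(uc i).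
split.
- by move=> i x y /(congr1 u); rewrite !ucE => /colim_in_inj.
- move=> i U oU; have -> : c i @` U = u @^-1` (colim_in i @` U).
    apply/seteqP; split=> y /=; first by case=> x Ux <-; rewrite ucE; exists x.
    by case=> x Ux e; exists x => //; rewrite -[y]uK -e colim_liftE.
  by move/continuousP: u_cont; apply; exact: colim_in_open.
- move=> y; have [i [x e]] := colim_in_surj (u y).
  by exists i, x; rewrite -[y]uK e colim_liftE.
Qed.

End DirectedColimit.

Arguments colimit_legs {I le Z z} le_directed z_oe z_id z_comp {P Zc c}.

Lemma compact_fin_gen_oe {P : topologicalType -> Prop} {X : topologicalType} :
  open_union_closed P -> compact [set: X] -> fin_gen_oe P X.
Proof.
move=> PU X_cpt I le Z z Zc c [le_directed PZ z_oe z_id z_comp] c_colim f f_cont.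
have [c_inj c_open c_surj] := colimit_legs le_directed z_oe z_id z_comp PU PZ c_colim.
have [_ [_ c_z] _] := c_colim.
split=> [|i g g' _ _ fg fg']; last first.
  have -> : g = g'.
    by apply/funext => x; apply: (@c_inj i); rewrite -[LHS]/((c i \o g) x) -fg fg'.
  by case: le_directed => refl _ _ _; exists i, (refl i).
have [k fk] : exists k, range f `<=` range (c k).
  apply: (compact_directed_cover le_directed) => [i j h _ [x _ <-]| i | y |].
  - by exists (z i j h x) => //; rewrite -(c_z i j h).
  - exact/c_open/openT.
  - by have [i [x ->]] := c_surj y; exists i; exists x.
  - by apply: continuous_compact X_cpt; exact: continuous_subspaceT.
have [g [g_cont ->]] := open_injection_factor (@c_inj k) (c_open k) f_cont fk.
by exists k, g.
Qed.

Section OpenSubspaces.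
Variable X : topologicalType.

Lemma set_val_continuous (A : set X) : continuous (set_val : set_type A -> X).
Proof. exact: initial_continuous. Qed.

Lemma set_val_open (A : set X) (U : set (set_type A)) :
  open A -> open U -> open (set_val @` U).
Proof.
move=> oA [W oW <-].
have -> : set_val @` (@set_val _ A @^-1` W) = W `&` A.
  apply/seteqP; split=> [_ [p Wp <-]|x [Wx Ax]].
    by split=> //; exact: set_mem (valP p).
  by exists (SigSub (mem_set Ax)).
exact: openI.
Qed.

Definition set_incl {A B : set X} (AB : A `<=` B) (p : set_type A) : set_type B :=
  SigSub (mem_set (AB _ (set_mem (valP p)))).

Lemma set_incl_open_embedding (A B : set X) (AB : A `<=` B) :
  open A -> open_embedding (set_incl AB).
Proof.
move=> oA; split.
- by move=> p q e; apply: val_inj; exact: (congr1 val e).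
- by apply: continuous_comp_initial; exact: set_val_continuous.
move=> U oU; have -> : set_incl AB @` U = set_val @^-1` (set_val @` U).
  apply/seteqP; split=> [_ [p Up <-]|q [p Up pq]]; first by exists p.
  by exists p => //; apply: val_inj.
by move/continuousP: (@set_val_continuous B); apply; exact: set_val_open.
Qed.

End OpenSubspaces.

Arguments set_incl {X A B}.

Lemma fsubset_directed_poset (K : choiceType) :
  directed_poset (fun G G' : {fset K} => (G `<=` G')%fset).
Proof.
split=> [G|G G' G''|G G'|A /finite_fsetP [B ->]]; first exact: fsubset_refl.
- exact: fsubset_trans.
- by move=> GG' G'G; apply/eqP; rewrite eqEfsubset GG' G'G.
- exists (\bigcup_(G <- B) G)%fset => G BG.
  exact: (@bigfcup_sup _ _ B G xpredT id BG).
Qed.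

Section FiniteUnionsOfCover.
Variables (X : topologicalType) (K : choiceType) (D : set K) (F : K -> set X).
Hypothesis F_open : forall k, D k -> open (F k).
Hypothesis F_cover : [set: X] `<=` cover D F.

Definition cover_union (G : {fset K}) : set X := \bigcup_(k in [set` G] `&` D) F k.

Let cover_union_open G : open (cover_union G).
Proof. by apply: bigcup_open => k [_]; exact: F_open. Qed.

Let cover_union_sub (G G' : {fset K}) :
  (G `<=` G')%fset -> cover_union G `<=` cover_union G'.
Proof.
by move=> /fsubsetP GG' x [k [Gk Dk] Fx]; exists k => //; split=> //; exact: GG'.
Qed.

Definition cover_incl (G G' : {fset K}) (h : (G `<=` G')%fset) :
  set_type (cover_union G) -> set_type (cover_union G') :=
  set_incl (cover_union_sub _ _ h).

Variable P : topologicalType -> Prop.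
Hypothesis PX : P X.

Lemma cover_union_diagram : pullback_closed P -> oe_diagram P cover_incl.
Proof.
move=> P_pullback; split=> [|G|G G' h|G h p|G G' G'' h h' h'' p].
- exact: fsubset_directed_poset.
- by apply: (P_pullback _ _ set_val) PX; [exact: val_inj | exact: set_val_continuous].
- exact: set_incl_open_embedding.
- exact: val_inj.
- exact: val_inj.
Qed.

Let index_at x := projT1 (cid2 (F_cover x I)).
Let index_atP x : D (index_at x) /\ F (index_at x) x.
Proof. by rewrite /index_at; case: cid2. Qed.

Let point_at x : set_type (cover_union [fset index_at x]%fset) :=
  SigSub (mem_set (ex_intro2 _ _ (index_at x)
    (conj (fset11 _) (index_atP x).1) (index_atP x).2)).

Lemma cover_union_colimit : is_colimit P cover_incl (fun G => set_val).
Proof.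
split=> //.
  by split=> [G|G G' h]; [exact: set_val_continuous | exact/funext].
move=> W PW d [d_cont d_incl].
pose u x := d _ (point_at x).
have uE G q : u (set_val q) = d G q.
  set G' := [fset index_at (set_val q)]%fset.
  rewrite /u -(d_incl _ _ (fsubsetUr G G')) -(d_incl _ _ (fsubsetUl G G')) /=.
  by congr (d _ _); apply: val_inj.
exists u; split; last first.
  move=> u' _ u'E; apply/funext => x.
  exact: (congr1 (fun h => h (point_at x)) (u'E _)).
split; last by move=> G; apply/funext => q /=; rewrite uE.
apply/continuousP => A oA.
have -> : u @^-1` A = \bigcup_(k in D) set_val @` (d [fset k]%fset @^-1` A).
  apply/seteqP; split=> [x Ax|_ [k Dk [q Aq <-]]]; last by rewrite /= uE.
  by exists (index_at x); [exact: (index_atP x).1 | exists (point_at x)].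
apply: bigcup_open => k Dk; apply: set_val_open; first exact: cover_union_open.
by move/continuousP: (d_cont [fset k]%fset); apply.
Qed.

End FiniteUnionsOfCover.

Arguments cover_union {X K} D F G.
Arguments cover_union_diagram {X K D F} F_open {P} PX.
Arguments cover_union_colimit {X K D F} F_open F_cover {P} PX.

Lemma fin_gen_oe_compact {P : topologicalType -> Prop} {X : topologicalType} :
  pullback_closed P -> P X -> fin_gen_oe P X -> compact [set: X].
Proof.
move=> P_pullback PX X_fg; rewrite compact_cover_unpointed => K D F F_open F_cover.
have [[G [g [_ idE]]] _] := X_fg _ _ _ _ _ _
  (cover_union_diagram F_open PX P_pullback) (cover_union_colimit F_open F_cover PX)
  id (fun x => cvg_id).
exists [fset k in G | `[< D k >]]%fset.
  by move=> k; rewrite !inE => /andP [_ /asboolP]; exact: mem_set.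
move=> x _; have [k [Gk Dk] Fx] : cover_union D F G x.
  rewrite [x in cover_union _ _ _ x](congr1 (fun h => h x) idE).
  exact: set_mem (valP (g x)).
by exists k => //=; rewrite !inE Gk; apply/asboolP.
Qed.

Lemma fin_gen_oe_compactP (sep : forall T : topologicalType, T -> T -> Prop) :
  (forall (A B : topologicalType) (f : A -> B),
     continuous f -> forall x y, sep B (f x) (f y) -> sep A x y) ->
  (forall (A B : topologicalType) (f : A -> B),
     injective f -> (forall U, open U -> open (f @` U)) ->
     forall x y, sep A x y -> sep B (f x) (f y)) ->
  forall X : topologicalType, separates_points sep X ->
    (fin_gen_oe (separates_points sep) X <-> compact [set: X]).
Proof.
move=> sep_pullback sep_push X sepX; split.
- exact: fin_gen_oe_compact (separates_points_pullback_closed _ sep_pullback) sepX.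
- exact: compact_fin_gen_oe (separates_points_open_union_closed _ sep_push).
Qed.

Theorem corollary3p3 :
  (forall X : topologicalType, Haus X -> (fin_gen_oe Haus X <-> compact [set: X])) /\
  (forall X : topologicalType, Top1 X -> (fin_gen_oe Top1 X <-> compact [set: X])) /\
  (forall X : topologicalType, Top0 X -> (fin_gen_oe Top0 X <-> compact [set: X])).
Proof.
rewrite HausE Top1E Top0E; split; [|split]; apply: fin_gen_oe_compactP.
- exact: sep_T2_pullback.
- exact: sep_T2_push.
- exact: sep_T1_pullback.
- exact: sep_T1_push.
- exact: sep_T0_pullback.
- exact: sep_T0_push.
Qed.
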